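(* For every $n\ge 0$, $|P_n^2|$ is at most the number of words of length $3n$ over the alphabet $\{m_1,m_2,m_3\}$ that contain none of $m_1m_3$, $m_1m_2m_2m_3$, $m_1m_2m_3m_2$ as a (contiguous) factor. This number equals $[x^{3n}]\,U(x)$ where $U(x)=\dfrac{1}{1-3x+x^2+2x^4}$, and consequently $|P_n^2|\in O(14.864^n)$.
   Context: A system of $2$ stacks in series consists of an input queue, stack 1, stack 2, and an output queue. Moves: $m_1$ moves the front of the input queue onto stack 1; $m_2$ pops stack 1 and pushes onto stack 2; $m_3$ pops stack 2 and enqueues at the back of the output queue. A word $w$ over $\{m_1,m_2,m_3\}$ acts on states by applying moves left to right (illegal if a move's source is empty). $I(n,2)$ is the state with $1,\dots,n$ in the input queue (front to back) and everything else empty; for $\pi\in S_n$, $t_\pi$ is the state with only the output queue nonempty, containing $\pi(1),\dots,\pi(n)$ front to back. $P_n^2\subseteq S_n$ is the set of $\pi$ such that some word $w$ legally transforms $I(n,2)$ into $t_\pi$. $[x^N]F(x)$ denotes the coefficient of $x^N$ in the power series $F$. *)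

From HB Require Import structures.
From mathcomp Require Import all_boot all_order all_algebra all_fingroup.
From Stdlib Require Import ClassicalEpsilon.
Set Implicit Arguments. Unset Strict Implicit. Unset Printing Implicit Defensive.
Import Order.TTheory GRing.Theory Num.Theory.

Definition move := 'I_3.
Definition m1 : move := @Ordinal 3 0 isT.
Definition m2 : move := @Ordinal 3 1 isT.
Definition m3 : move := @Ordinal 3 2 isT.

(* State: (input queue front-first, stack 1 top-first, stack 2 top-first,
   output queue front-first). *)
Definition state : Type := (seq nat * seq nat * seq nat * seq nat)%type.

Definition step (m : move) (s : state) : option state :=
  let '(inq, s1, s2, out) := s in
  match val m with
  | 0 => match inq with x :: r => Some (r, x :: s1, s2, out) | [::] => None end
  | 1 => match s1 with x :: r => Some (inq, r, x :: s2, out) | [::] => None end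
  | _ => match s2 with x :: r => Some (inq, s1, r, rcons out x) | [::] => None end
  end.

Definition run (w : seq move) (s : state) : option state :=
  foldl (fun os m => obind (step m) os) (Some s) w.

(* I(n,2): labels 0..n-1 (relabelling of 1..n) in the input queue. *)
Definition init_state (n : nat) : state := (iota 0 n, [::], [::], [::]).

Definition final_state (n : nat) (pi : 'S_n) : state :=
  ([::], [::], [::], [seq val (pi i) | i <- enum 'I_n]).

Definition asbool (P : Prop) : bool :=
  if excluded_middle_informative P then true else false.

Definition sortable2 (n : nat) (pi : 'S_n) : Prop :=
  exists w : seq move, run w (init_state n) = Some (final_state pi).

Definition P2 (n : nat) : {set 'S_n} := [set pi | asbool (sortable2 pi)].

Definition avoids (w : seq move) : bool :=
  [&& ~~ infix [:: m1; m3] w,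
      ~~ infix [:: m1; m2; m2; m3] w &
      ~~ infix [:: m1; m2; m3; m2] w].

Definition nwords (N : nat) : nat :=
  #|[set w : N.-tuple move | avoids w]|.

Definition Uden : seq int := [:: 1; -3; 1; 0; 2]%R.

Definition is_series_inverse (p : seq int) (c : nat -> int) : Prop :=
  forall N : nat, (\sum_(k < N.+1) p`_k * c (N - k)%N)%R = Posz (N == 0%N).

From HB Require Import structures.
From mathcomp Require Import all_boot all_order all_algebra all_fingroup.
From mathcomp Require Import zify ring lra.
From Stdlib Require Import ClassicalEpsilon.
Set Implicit Arguments. Unset Strict Implicit. Unset Printing Implicit Defensive.
Import Order.TTheory GRing.Theory Num.Theory.

(* Splitting by the
      first letter shows that the number [navoid N] of avoiding words satisfies
      navoid (M+4) = 3 navoid (M+3) - navoid (M+2) - 2 navoid M, i.e. it is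
      the (unique) series inverse of 1 - 3x + x^2 + 2x^4.
   2. Normal forms.  Each forbidden factor acts on machine states exactly as a
      reordering with its m1 moved to the right (m1m3 ~ m3m1, m1m2m2m3 ~
      m2m3m1m2, m1m2m3m2 ~ m2m1m2m3).  Rewriting decreases the total
      distance of the m1's to the end of the word, so every sorting word can be
      replaced by an avoiding one of the same length, which is 3n.  Distinct
      permutations need distinct words, so |P_n^2| <= navoid (3n).
   3. Growth.  For a sequence u obeying the recurrence whose first terms at
      least double, the functional psi of four consecutive terms satisfies
      psi (M+1) = r psi M - char(r) u M, so psi M <= r^M psi 0 when char(r) >= 0,
      while psi M bounds u (M+3) from below.  With r = 1281/521 (just above the
      dominant root 2.45873...) and r^3 <= 14.864 the bound follows. *)

Definition moves : seq move := [:: m1; m2; m3].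

Lemma mem_moves (x : move) : x \in moves.
Proof. by case: x => -[|[|[|k]]] Hk //; apply/eqP; apply: val_inj. Qed.

Lemma uniq_moves : uniq moves.
Proof. by []. Qed.

Fixpoint words (N : nat) : seq (seq move) :=
  if N is K.+1 then [seq x :: w | x <- moves, w <- words K] else [:: [::]].

Arguments words : simpl never.

Lemma wordsS (K : nat) : words K.+1 = [seq x :: w | x <- moves, w <- words K].
Proof. by []. Qed.

Lemma mem_words (N : nat) (w : seq move) : (w \in words N) = (size w == N).
Proof.
elim: N w => [|N IH] [|x w] //; rewrite wordsS.
- by apply/negbTE/allpairsP => -[[y v] [_ _]].
- rewrite eqSS -IH; apply/allpairsP/idP => [[[y v] [_ Hv [_ ->]]] //|Hw].
  by exists (x, w); rewrite mem_moves.
Qed.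

Lemma uniq_words (N : nat) : uniq (words N).
Proof.
elim: N => // N IH; rewrite wordsS; apply: allpairs_uniq => //.
by move=> [x v] [y u] _ _ [-> ->].
Qed.

Lemma card_tuples_words (N : nat) (P : pred (seq move)) :
  #|[set w : N.-tuple move | P w]| = count P (words N).
Proof.
have words_enum : perm_eq (words N) (map val (enum {: N.-tuple move})).
  apply: uniq_perm; first exact: uniq_words.
    by rewrite map_inj_uniq ?enum_uniq //; apply: val_inj.
  move=> w; rewrite mem_words; apply/idP/mapP => [Hw|[t _ ->]].
    by exists (Tuple Hw); rewrite ?mem_enum.
  by rewrite size_tuple.
rewrite (seq.permP words_enum) count_map enumT cardsE cardE /enum_mem size_filter.
exact: eq_count.
Qed.

Lemma count_words_cons (K : nat) (P : pred (seq move)) :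
  count P (words K.+1) = \sum_(x <- moves) count (fun w => P (x :: w)) (words K).
Proof.
rewrite wordsS count_flatten sumnE !big_map.
by apply: eq_bigr => x _; rewrite count_map.
Qed.

Lemma sum_moves (F : move -> nat) : \sum_(x <- moves) F x = F m1 + F m2 + F m3.
Proof. by rewrite !big_cons big_nil addn0 addnA. Qed.

Lemma count_words_prefix (p : seq move) (M : nat) (P : pred (seq move)) :
  count (fun w => prefix p w && P w) (words (size p + M))
  = count (fun w => P (p ++ w)) (words M).
Proof.
elim: p P => [|x p IH] P; first by apply: eq_count => w; rewrite prefix0s.
change (size (x :: p) + M) with (size p + M).+1.
rewrite count_words_cons (bigD1_seq x (mem_moves x) uniq_moves) /= big1 => [|y Hyx].
  rewrite addn0 -(IH (fun w => P (x :: w))).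
  by apply: eq_count => w; rewrite eqxx.
by rewrite (@eq_count _ _ pred0) ?count_pred0 // => w; rewrite eq_sym (negbTE Hyx).
Qed.

(* The forbidden factors all start with m1, so only an m1 can create one. *)
Lemma avoids_cons (x : move) (w : seq move) : x != m1 -> avoids (x :: w) = avoids w.
Proof.
move=> Hx; rewrite /avoids !infix_consl !prefix_cons eq_sym (negbTE Hx).
by rewrite !andFb !orFb.
Qed.

Lemma avoids_cat (p w : seq move) : m1 \notin p -> avoids (p ++ w) = avoids w.
Proof.
elim: p => //= x p IH; rewrite inE negb_or => /andP[Hx Hp].
by rewrite avoids_cons 1?eq_sym // IH.
Qed.

Definition m1_blocked (w : seq move) : bool :=
  [|| prefix [:: m3] w, prefix [:: m2; m2; m3] w | prefix [:: m2; m3; m2] w].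

Lemma avoids_m1 (w : seq move) : avoids (m1 :: w) = ~~ m1_blocked w && avoids w.
Proof.
rewrite /avoids /m1_blocked !infix_consl !prefix_cons eqxx /=.
case: (prefix [:: m3] w); case: (prefix [:: m2; m2; m3] w);
  case: (prefix [:: m2; m3; m2] w); case: (infix [:: m1; m3] w);
  case: (infix [:: m1; m2; m2; m3] w); by case: (infix [:: m1; m2; m3; m2] w).
Qed.

Definition navoid (N : nat) : nat := count avoids (words N).

Lemma nwordsE (N : nat) : nwords N = navoid N.
Proof. exact: card_tuples_words. Qed.

Lemma count_avoids_cons (x : move) (K : nat) : x != m1 ->
  count (fun w => avoids (x :: w)) (words K) = navoid K.
Proof. by move=> Hx; apply: eq_count => w; rewrite avoids_cons. Qed.

Lemma count_avoids_prefix (p : seq move) (M : nat) : m1 \notin p ->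
  count (fun w => prefix p w && avoids w) (words (size p + M)) = navoid M.
Proof.
by move=> Hp; rewrite count_words_prefix; apply: eq_count => w; rewrite avoids_cat.
Qed.

Lemma count_split (T : Type) (a b : pred T) (s : seq T) :
  count (fun x => ~~ b x && a x) s + count (fun x => b x && a x) s = count a s.
Proof. by elim: s => //= y s <-; case: (a y); case: (b y) => /=; lia. Qed.

(* Avoiding words of length M+3 that may not follow m1: they start with m3
   (navoid (M+2) of them), with m2m2m3 or with m2m3m2 (navoid M each). *)
Lemma count_m1_blocked (M : nat) :
  count (fun w => m1_blocked w && avoids w) (words M.+3) = navoid M.+2 + 2 * navoid M.
Proof.
have after_m2 : count (fun w => (prefix [:: m2; m3] w || prefix [:: m3; m2] w) && avoids w)
                  (words M.+2) = 2 * navoid M.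
  rewrite count_words_cons sum_moves /= count_pred0 add0n.
  under eq_count do rewrite orbF avoids_cons //.
  under [X in _ + X]eq_count do rewrite avoids_cons //.
  by rewrite (@count_avoids_prefix [:: m3]) // (@count_avoids_prefix [:: m2]) // addnn mul2n.
rewrite count_words_cons sum_moves /m1_blocked /= count_pred0 add0n.
under eq_count do rewrite avoids_cons //.
under [X in _ + X]eq_count do rewrite prefix0s avoids_cons //.
by rewrite after_m2 addnC.
Qed.

(* Classifying avoiding words of length M+4 by their first letter. *)
Lemma navoid_rec (M : nat) : navoid M.+4 + navoid M.+2 + 2 * navoid M = 3 * navoid M.+3.
Proof.
rewrite /navoid count_words_cons sum_moves.
under eq_count do rewrite avoids_m1.
rewrite !count_avoids_cons //.
have := count_split avoids m1_blocked (words M.+3).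
rewrite count_m1_blocked /navoid; lia.
Qed.

Lemma navoid_small : [/\ navoid 0 = 1, navoid 1 = 3, navoid 2 = 8 & navoid 3 = 21].
Proof. by []. Qed.

Local Open Scope ring_scope.

Lemma series_inverse_unique (p : seq int) (c d : nat -> int) : p`_0 = 1 ->
  is_series_inverse p c -> is_series_inverse p d -> c =1 d.
Proof.
move=> p0 Hc Hd; elim/ltn_ind => N IH.
have := Hd N; have := Hc N; rewrite !big_ord_recl p0 !mul1r subn0.
have <- : \sum_(i < N) p`_(bump 0 i) * c (N - bump 0 i)%N
          = \sum_(i < N) p`_(bump 0 i) * d (N - bump 0 i)%N.
  by apply: eq_bigr => i _; rewrite IH // /bump /=; have := ltn_ord i; lia.
by move=> <- /addIr.
Qed.

Lemma navoid_series : is_series_inverse Uden (fun N => Posz (navoid N)).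
Proof.
case=> [|[|[|[|M]]]]; rewrite !big_ord_recl ?big_ord0 //.
rewrite big1 => [|i _]; last by rewrite nth_default ?mul0r.
rewrite /= /bump /= !subSS !subn0.
have := navoid_rec M; lia.
Qed.

Local Close Scope ring_scope.

Lemma run_cons (x : move) (w : seq move) (s : state) :
  run (x :: w) s = if step x s is Some t then run w t else None.
Proof.
rewrite /run /=; case: (step x s) => //=.
by elim: w.
Qed.

Lemma run_cat (a b : seq move) (s : state) : run (a ++ b) s = obind (run b) (run a s).
Proof. by elim: a s => //= x a IH s; rewrite !run_cons; case: (step x s). Qed.

(* The forbidden factors act like reorderings of themselves in which the
   m1 occurs later; this is what makes the rewriting below possible. *)
Lemma run_m1m3 : run [:: m1; m3] =1 run [:: m3; m1].
Proof. by case=> [[[[|x i] [|y a]] [|z b]] o]. Qed.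

Lemma run_m1m2m2m3 : run [:: m1; m2; m2; m3] =1 run [:: m2; m3; m1; m2].
Proof. by case=> [[[[|x i] [|y a]] [|z b]] o]. Qed.

Lemma run_m1m2m3m2 : run [:: m1; m2; m3; m2] =1 run [:: m2; m1; m2; m3].
Proof. by case=> [[[[|x i] [|y a]] [|z b]] o]. Qed.

Fixpoint m1_weight (w : seq move) : nat :=
  if w is x :: r then (x == m1) * size r + m1_weight r else 0.

Lemma m1_weight_cat (a b : seq move) :
  m1_weight (a ++ b) = m1_weight a + m1_weight b + count_mem m1 a * size b.
Proof.
elim: a => [|x a IH] /=; first by rewrite mul0n addn0.
by rewrite IH size_cat; case: (x == m1) => /=; lia.
Qed.

Lemma replace_factor (p p' a b : seq move) :
  size p' = size p -> count_mem m1 p' = count_mem m1 p -> m1_weight p' < m1_weight p ->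
  run p =1 run p' ->
  [/\ m1_weight (a ++ p' ++ b) < m1_weight (a ++ p ++ b),
      size (a ++ p' ++ b) = size (a ++ p ++ b)
    & run (a ++ p' ++ b) =1 run (a ++ p ++ b)].
Proof.
move=> Hsize Hcount Hweight Hrun; split.
- by rewrite !m1_weight_cat !size_cat Hsize Hcount; lia.
- by rewrite !size_cat Hsize.
- by move=> s; rewrite !run_cat; case: (run a s) => //= t; rewrite !run_cat Hrun.
Qed.

Lemma avoiding_equivalent (w : seq move) :
  exists2 w', avoids w' & size w' = size w /\ run w' =1 run w.
Proof.
have [k] := ubnP (m1_weight w); elim: k w => // k IH w Hk.
have reduce p p' : size p' = size p -> count_mem m1 p' = count_mem m1 p ->
    m1_weight p' < m1_weight p -> run p =1 run p' -> infix p w ->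
    exists2 w', avoids w' & size w' = size w /\ run w' =1 run w.
  move=> Hsize Hcount Hweight Hrun /infixP[a [b Ew]]; subst w.
  have [lt_weight eq_size eq_run] := replace_factor a b Hsize Hcount Hweight Hrun.
  have [|w' Hw' [Hsize' Hrun']] := IH (a ++ p' ++ b); first exact: leq_trans lt_weight Hk.
  by exists w' => //; split=> [|s]; rewrite ?Hsize' ?Hrun'.
case Hav: (avoids w); first by exists w.
move: Hav; rewrite /avoids.
have [I _|_] := boolP (infix [:: m1; m3] w).
  by apply: (reduce _ [:: m3; m1]) I => //; exact: run_m1m3.
have [I _|_] := boolP (infix [:: m1; m2; m2; m3] w).
  by apply: (reduce _ [:: m2; m3; m1; m2]) I => //; exact: run_m1m2m2m3.
have [I _|_] := boolP (infix [:: m1; m2; m3; m2] w) => //.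
by apply: (reduce _ [:: m2; m1; m2; m3]) I => //; exact: run_m1m2m3m2.
Qed.

(* Each input entry needs exactly three moves to reach the output. *)
Definition moves_left (s : state) : nat :=
  let '(inq, s1, s2, _) := s in 3 * size inq + 2 * size s1 + size s2.

Lemma run_moves_left (w : seq move) (s t : state) :
  run w s = Some t -> size w + moves_left t = moves_left s.
Proof.
elim: w s => [|x w IH] s /=; first by case=> ->.
rewrite run_cons; case Hx: (step x s) => [u|] // /IH Hu.
move: s Hx Hu => [[[i a] b] o]; case: x => -[|[|[|k]]] Hk //=.
- by case: i => [|y i] //= [<-] /=; lia.
- by case: a => [|y a] //= [<-] /=; lia.
- by case: b => [|y b] //= [<-] /=; lia.
Qed.

Lemma asboolP (P : Prop) : reflect P (asbool P).
Proof. by rewrite /asbool; case: excluded_middle_informative => H; constructor. Qed.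

Lemma sortable_avoiding_word (n : nat) (pi : 'S_n) : sortable2 pi ->
  exists w : (3 * n).-tuple move,
    avoids w && (run w (init_state n) == Some (final_state pi)).
Proof.
case=> w Hw; have [w' Hw' [_ Hrun]] := avoiding_equivalent w.
rewrite -Hrun in Hw.
have Hsize : size w' == 3 * n.
  by have := run_moves_left Hw; rewrite /= size_iota; lia.
by exists (Tuple Hsize); rewrite /= Hw' Hw eqxx.
Qed.

Lemma final_state_inj (n : nat) (pi pi' : 'S_n) :
  final_state pi = final_state pi' -> pi = pi'.
Proof.
case=> /eq_in_map Heq; apply/permP => i; apply: val_inj.
exact: Heq (mem_enum _ i).
Qed.

(* Each permutation in P_n^2 is the output of some avoiding word of
   length 3n, and a word has at most one output. *)
Lemma card_P2_le (n : nat) : #|P2 n| <= nwords (3 * n).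
Proof.
pose output (w : (3 * n).-tuple move) : option 'S_n :=
  [pick pi | run w (init_state n) == Some (final_state pi)].
rewrite /nwords -(card_imset (P2 n) (@Some_inj _)).
apply: leq_trans (leq_imset_card output _); apply: subset_leq_card.
apply/subsetP => o /imsetP[pi]; rewrite inE => /asboolP /sortable_avoiding_word[w].
case/andP=> Hw /eqP Hrun ->; apply/imsetP; exists w; first by rewrite inE.
rewrite /output; case: pickP => [pi' /eqP|/(_ pi)]; last by rewrite Hrun eqxx.
by rewrite Hrun => Heq; rewrite (final_state_inj (Some_inj Heq)).
Qed.

Local Open Scope ring_scope.

Section RecurrenceGrowth.

Variables (R : realFieldType) (u : nat -> R).
Hypothesis u_rec : forall M, u M.+4 = 3 * u M.+3 - u M.+2 - 2 * u M.
Hypothesis u0_ge0 : 0 <= u 0.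
Hypotheses (u_double0 : 2 * u 0 <= u 1) (u_double1 : 2 * u 1 <= u 2)
           (u_double2 : 2 * u 2 <= u 3).

Lemma u_double_ge0 (N : nat) : 0 <= u N /\ 2 * u N <= u N.+1.
Proof.
suff inv M : [/\ 0 <= u M, 2 * u M <= u M.+1, 2 * u M.+1 <= u M.+2 & 2 * u M.+2 <= u M.+3].
  by have [] := inv N.
elim: M => [|M [h0 h1 h2 h3]]; first by split.
by split; rewrite ?u_rec; lra.
Qed.

Lemma u_ge0 (N : nat) : 0 <= u N.
Proof. by have [] := u_double_ge0 N. Qed.

Lemma u_double (N : nat) : 2 * u N <= u N.+1.
Proof. by have [] := u_double_ge0 N. Qed.

Definition char_rec (x : R) : R := x ^+ 4 - 3 * x ^+ 3 + x ^+ 2 + 2.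

Variable r : R.

(* The functional of four consecutive terms whose coefficients make it an
   eigenvector of the recurrence for the value r, up to the error term
   char_rec r * u M (which vanishes exactly when r is a root). *)
Definition psi (M : nat) : R :=
  u M.+3 + (r - 3) * u M.+2 + (r ^+ 2 - 3 * r + 1) * u M.+1
  + r * (r ^+ 2 - 3 * r + 1) * u M.

Lemma psiS (M : nat) : psi M.+1 = r * psi M - char_rec r * u M.
Proof. by rewrite /psi /char_rec u_rec; ring. Qed.

Lemma psi_geometric (N : nat) : 0 <= r -> 0 <= char_rec r -> psi N <= r ^+ N * psi 0.
Proof.
move=> r_ge0 char_ge0; elim: N => [|N IH]; first by rewrite mul1r.
rewrite psiS exprS -mulrA.
have := u_ge0 N; have := ler_wpM2l r_ge0 IH; nra.
Qed.

(* Under doubling, psi M controls u (M+3) from below: psi M - kappa u (M+3)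
   is a sum of products of two nonpositive factors. *)
Definition kappa : R :=
  1 + (r - 3) / 2 + (r ^+ 2 - 3 * r + 1) / 4 + r * (r ^+ 2 - 3 * r + 1) / 8.

Lemma psi_lower (M : nat) : 0 <= r -> r ^+ 2 - 3 * r + 1 <= 0 -> kappa * u M.+3 <= psi M.
Proof.
move=> r_ge0 c1_le0.
have c2_le0 : r - 3 <= 0 by nra.
have c0_le0 : r * (r ^+ 2 - 3 * r + 1) <= 0 by rewrite mulr_ge0_le0.
have d2 : u M.+2 - u M.+3 / 2 <= 0.
  by have := u_double M.+2; lra.
have d1 : u M.+1 - u M.+3 / 4 <= 0.
  by have := u_double M.+1; have := u_double M.+2; lra.
have d0 : u M - u M.+3 / 8 <= 0.
  by have := u_double M; have := u_double M.+1; have := u_double M.+2; lra.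
rewrite -subr_ge0.
have -> : psi M - kappa * u M.+3 = (r - 3) * (u M.+2 - u M.+3 / 2)
    + (r ^+ 2 - 3 * r + 1) * (u M.+1 - u M.+3 / 4)
    + r * (r ^+ 2 - 3 * r + 1) * (u M - u M.+3 / 8).
  by rewrite /psi /kappa; field.
by rewrite !addr_ge0 ?mulr_le0.
Qed.

Lemma u_growth (N : nat) : 0 <= r -> 0 <= char_rec r -> r ^+ 2 - 3 * r + 1 <= 0 ->
  0 < kappa -> u N <= psi 0 / kappa * r ^+ N.
Proof.
move=> r_ge0 char_ge0 c1_le0 kappa_gt0.
have u_le3 : u N <= u N.+3.
  have := u_double N; have := u_double N.+1; have := u_double N.+2; have := u_ge0 N; lra.
rewrite mulrAC ler_pdivlMr // [psi 0 * _]mulrC.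
apply: le_trans (psi_geometric N r_ge0 char_ge0).
apply: le_trans (psi_lower N r_ge0 c1_le0).
by rewrite mulrC ler_wpM2l // ltW.
Qed.

End RecurrenceGrowth.

Lemma mul_exprM_le (R : numDomainType) (C r b : R) (n : nat) :
  0 <= C -> 0 <= r -> r ^+ 3 <= b -> C * r ^+ (3 * n)%N <= C * b ^+ n.
Proof.
move=> C_ge0 r_ge0 r3_le; have r3_ge0 : 0 <= r ^+ 3 := exprn_ge0 3 r_ge0.
have b_ge0 : 0 <= b := le_trans r3_ge0 r3_le.
rewrite exprM; apply: (ler_wpM2l C_ge0).
by apply: (lerXn2r n _ _ r3_le); rewrite nnegrE; [exact: r3_ge0 | exact: b_ge0].
Qed.

Definition navoidQ (N : nat) : rat := (navoid N)%:R.

Lemma navoidQ_rec (M : nat) :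
  navoidQ M.+4 = 3 * navoidQ M.+3 - navoidQ M.+2 - 2 * navoidQ M.
Proof.
have /(congr1 (fun n => n%:R : rat)) := navoid_rec M.
by rewrite /navoidQ !natrD; lra.
Qed.

Lemma navoidQ_init : [/\ 0 <= navoidQ 0, 2 * navoidQ 0 <= navoidQ 1,
  2 * navoidQ 1 <= navoidQ 2 & 2 * navoidQ 2 <= navoidQ 3].
Proof. by have [n0 n1 n2 n3] := navoid_small; rewrite /navoidQ n0 n1 n2 n3; split; lra. Qed.

(* A rational rate just above the dominant root 2.45873... of char_rec,
   whose cube is still at most 14.864. *)
Definition rate : rat := 1281%:R / 521%:R.

Lemma rate_bounds : [/\ 0 <= rate, 0 <= char_rec rate, rate ^+ 2 - 3 * rate + 1 <= 0,
  0 < kappa rate & rate ^+ 3 <= 14864%:R / 1000%:R].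
Proof. by rewrite /char_rec /kappa /rate; split; lra. Qed.

Lemma navoid_growth (N : nat) :
  0 <= psi navoidQ rate 0 / kappa rate /\
  navoidQ N <= psi navoidQ rate 0 / kappa rate * rate ^+ N.
Proof.
have [r_ge0 char_ge0 c1_le0 kappa_gt0 _] := rate_bounds.
have [h0 h1 h2 h3] := navoidQ_init.
have psi0_ge0 : 0 <= psi navoidQ rate 0.
  apply: le_trans (psi_lower navoidQ_rec h0 h1 h2 h3 0 r_ge0 c1_le0).
  exact: mulr_ge0 (ltW kappa_gt0) (u_ge0 navoidQ_rec h0 h1 h2 h3 3).
split; first exact: divr_ge0 psi0_ge0 (ltW kappa_gt0).
exact: (u_growth navoidQ_rec h0 h1 h2 h3 N r_ge0 char_ge0 c1_le0 kappa_gt0).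
Qed.

Local Close Scope ring_scope.

Theorem mainTheorem10 :
  (forall n : nat,
      #|P2 n| <= nwords (3 * n)
   /\ (forall c : nat -> int, is_series_inverse Uden c ->
         Posz (nwords (3 * n)) = c (3 * n)%N))
  /\ (exists (C : rat) (N0 : nat), forall n : nat, (N0 <= n)%N ->
        ((#|P2 n|)%:R <= C * (14864%:R / 1000%:R) ^+ n :> rat)%R).
Proof.
split=> [n|].
  split; first exact: card_P2_le.
  by move=> c Hc; rewrite nwordsE (series_inverse_unique _ navoid_series Hc).
exists (psi navoidQ rate 0 / kappa rate)%R, 0 => n _.
have card_le : ((#|P2 n|)%:R <= navoidQ (3 * n) :> rat)%R.
  by rewrite /navoidQ ler_nat -nwordsE; apply: card_P2_le.
have [C_ge0 growth] := navoid_growth (3 * n).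
have [r_ge0 _ _ _ r3_le] := rate_bounds.
exact: le_trans card_le (le_trans growth (mul_exprM_le n C_ge0 r_ge0 r3_le)).
Qed.
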